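(* Let $J$ be a countable set and $\mathcal{A}$ the non-unital algebra of finitely supported functions $J\to\mathbb{R}$ with pointwise operations. Let $\sigma:J\to J$ be a bijection and $\tilde{\sigma}(f)=f\circ\sigma^{-1}$. In the skew polynomial ring $\mathcal{A}[x,\tilde{\sigma},0]$, the centralizer of $\mathcal{A}$ is $$C(\mathcal{A})=\Big\{\sum_{k=0}^m f_kx^k : f_k\in\mathcal{A},\ f_k=0\text{ on } Sep^k(J)\text{ for all }k\Big\}.$$
   Context: $\mathcal{A}[x,\tilde{\sigma},0]$ is the set of formal sums $\sum_{k=0}^m f_kx^k$ with $f_k\in\mathcal{A}$, with coefficientwise addition and with multiplication the bilinear extension of $(fx^k)(gx^l)=f\,\tilde{\sigma}^k(g)\,x^{k+l}$; $\mathcal{A}$ is identified with the degree-$0$ elements. The centralizer of $\mathcal{A}$ is the set of elements commuting with every element of $\mathcal{A}$. For an integer $k$, $Sep^k(J)=\{p\in J:\sigma^k(p)\neq p\}$ (so $Sep^0(J)=\emptyset$). *)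

From mathcomp Require Import all_boot all_order all_algebra.
From mathcomp Require Import Rstruct.
From Stdlib Require Rdefinitions.
Local Notation R := Rdefinitions.R.
Set Implicit Arguments. Unset Strict Implicit. Unset Printing Implicit Defensive.
Import GRing.Theory.
Local Open Scope ring_scope.

Section Skew.
Variable J : countType.

Definition fin_supp (f : J -> R) : Prop :=
  exists s : seq J, forall j, f j != 0 -> j \in s.

(* An element of A[x, sigma~, 0] is a formal sum sum_{k=0}^m f_k x^k,
   represented by its coefficient sequence k |-> f_k (zero for k > m). *)
Definition skew_elt (p : nat -> J -> R) : Prop :=
  (exists m : nat, forall k : nat, (m < k)%N -> p k = (fun _ => 0)) /\
  (forall k, fin_supp (p k)).

(* sigma~^k (g) = g o sigma^{-k}, where sigmai is the inverse of sigma. *)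
Definition sigmat_pow (sigmai : J -> J) (k : nat) (g : J -> R) : J -> R :=
  fun j => g (iter k sigmai j).

(* Multiplication: bilinear extension of (f x^k)(g x^l) = f sigma~^k(g) x^(k+l). *)
Definition skew_mul (sigmai : J -> J) (p q : nat -> J -> R) : nat -> J -> R :=
  fun n j => \sum_(k < n.+1) p k j * sigmat_pow sigmai k (q (n - k)%N) j.

(* A identified with the degree-0 elements. *)
Definition deg0 (a : J -> R) : nat -> J -> R :=
  fun n => if n == 0%N then a else (fun _ => 0).

Definition in_centralizer (sigmai : J -> J) (p : nat -> J -> R) : Prop :=
  skew_elt p /\
  forall a : J -> R, fin_supp a ->
    skew_mul sigmai p (deg0 a) = skew_mul sigmai (deg0 a) p.

Definition Sep (sigma : J -> J) (k : nat) : pred J :=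
  fun j => iter k sigma j != j.

End Skew.

(** Multiplying by a degree-0 element [a] on either side acts coefficientwise:
    [(p a)_n (j) = p_n(j) a(sigma^-n j)] and [(a p)_n (j) = a(j) p_n(j)].  So [p]
    commutes with every [a] exactly when each [p_n] vanishes wherever
    [sigma^-n j <> j]; testing against indicator functions of points gives the
    converse.  Finally [sigma^-n] and [sigma^n] have the same fixed points. *)

From mathcomp Require Import all_boot all_order all_algebra.
From mathcomp Require Import Rstruct.
From Stdlib Require Rdefinitions.
From Stdlib Require Import FunctionalExtensionality.
Local Notation R := Rdefinitions.R.
Local Open Scope ring_scope.
Import GRing.Theory.

Section IterCancel.
Variables (T : Type) (f g : T -> T).

Lemma iter_can : cancel g f -> forall k, cancel (iter k g) (iter k f).
Proof. by move=> gK; elim=> [|k IHk] x //=; rewrite -iterS iterSr gK IHk. Qed.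

Lemma iter_can_fixed k x : cancel g f -> iter k g x = x -> iter k f x = x.
Proof. by move=> gK gx; rewrite -{1}gx iter_can. Qed.

End IterCancel.

Section CentralizerOfA.
Variables (J : countType) (sigmai : J -> J).

Lemma skew_mul_deg0r p a n j :
  skew_mul sigmai p (deg0 a) n j = p n j * a (iter n sigmai j).
Proof.
rewrite /skew_mul big_ord_recr /= subnn big1 ?add0r // => i _.
by rewrite /deg0 subn_eq0 leqNgt ltn_ord mulr0.
Qed.

Lemma skew_mul_deg0l p a n j :
  skew_mul sigmai (deg0 a) p n j = a j * p n j.
Proof.
rewrite /skew_mul big_ord_recl /= subn0 big1 ?addr0 // => i _.
by rewrite /deg0 mul0r.
Qed.

Lemma fin_supp_indicator (j : J) : fin_supp (fun x : J => (x == j)%:R).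
Proof. by exists [:: j] => x; rewrite mem_seq1; case: (x == j); rewrite ?eqxx. Qed.

Lemma centralizes_fin_suppP p :
  (forall a, fin_supp a -> skew_mul sigmai p (deg0 a) = skew_mul sigmai (deg0 a) p)
  <-> (forall n j, iter n sigmai j != j -> p n j = 0).
Proof.
split=> [pC n j moved | p0 a _].
  have := congr1 (fun q => q n j) (pC _ (fin_supp_indicator j)).
  by rewrite /= skew_mul_deg0r skew_mul_deg0l eqxx (negbTE moved) mulr0 mul1r.
apply: functional_extensionality => n; apply: functional_extensionality => j.
rewrite skew_mul_deg0r skew_mul_deg0l.
have [fixed | moved] := eqVneq (iter n sigmai j) j.
  by rewrite fixed mulrC.
by rewrite p0 ?mulr0 ?mul0r.
Qed.

End CentralizerOfA.

Theorem theorem7 (J : countType) (sigma sigmai : J -> J)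
    (Hs1 : cancel sigma sigmai) (Hs2 : cancel sigmai sigma)
    (p : nat -> J -> R) :
  in_centralizer sigmai p <->
  (skew_elt p /\ forall (k : nat) (j : J), j \in Sep sigma k -> p k j = 0).
Proof.
have Sep_inv k j : (j \in Sep sigma k) = (iter k sigmai j != j).
  rewrite unfold_in /Sep; congr negb.
  by apply/eqP/eqP; [apply: iter_can_fixed Hs1 | apply: iter_can_fixed Hs2].
rewrite /in_centralizer centralizes_fin_suppP.
split=> -[p_elt p0]; split=> // k j.
  by rewrite Sep_inv; apply: p0.
by rewrite -Sep_inv; apply: p0.
Qed.
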